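(* Let $p=(p_i)_{i\in\mathbb{N}}\in[0,1]^{\mathbb{N}}$ be a cookie environment, and let $\overline{p}_n=\frac1n\sum_{i=1}^n p_i$. Suppose that the limit $\overline{p}=\lim_{n\to\infty}\overline{p}_n$ exists and lies in $(0,1)$, and that there is $K\in\mathbb{R}$ with $|\overline{p}_n-\overline{p}|\le\frac Kn$ for all $n\in\mathbb{N}$. Let $\mu=\frac{\overline{p}}{1-\overline{p}}$. Then there is a constant $c>0$ depending only on $p$ such that for all positive integers $x$ and all $\varepsilon>0$, \[ \Pr\Big[\Big|\frac{U_p(x)}{x}-\mu\Big|>\varepsilon\Big]\le 2\exp\Big(-\frac{c\varepsilon^2}{1+\mu+\varepsilon}x\Big). \]
   Context: For a cookie environment $p$, let $B_1,B_2,\dots$ be independent Bernoulli random variables with $\Pr[B_i=1]=p_i$ ($B_i=1$ is a ''success'', $B_i=0$ a ''failure''). For a positive integer $x$, $U_p(x)=\inf\{k\in\mathbb{N}:\sum_{i=1}^k(1-B_i)=x\}-x$, i.e. the number of successes before the $x$-th failure. *)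

From HB Require Import structures.
From mathcomp Require Import all_boot all_order all_algebra.
From mathcomp Require Import all_classical all_reals all_analysis.
Set Implicit Arguments. Unset Strict Implicit. Unset Printing Implicit Defensive.
Import Order.TTheory GRing.Theory Num.Theory.
Import numFieldNormedType.Exports.
Local Open Scope classical_set_scope.
Local Open Scope ring_scope.

(* Convention: indices are 0-based: the paper's p_i / B_i (i >= 1) are
   p (i-1) / B (i-1) here. *)

Section Cookie.
Context {R : realType}.

Definition pavg (p : nat -> R) (n : nat) : R :=
  (\sum_(i < n) p i) / n%:R.

Context {d : measure_display} {T : measurableType d}.

Definition nfail (B : nat -> T -> bool) (k : nat) (w : T) : nat :=
  \sum_(i < k) (~~ B i w : nat).

Definition Ucookie (B : nat -> T -> bool) (x : nat) (w : T) : \bar R :=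
  match pselect (exists k, nfail B k w == x) with
  | left h => (((ex_minn h) - x)%N%:R)%:E
  | right _ => +oo%E
  end.

Definition bool_rvs (B : nat -> T -> bool) : Prop :=
  forall i (b : bool), measurable [set w | B i w = b].

Definition mutually_independent (P : probability T R) (B : nat -> T -> bool) : Prop :=
  forall (I : seq nat) (b : nat -> bool), uniq I ->
    P [set w | forall i, i \in I -> B i w = b i] =
    (\prod_(i <- I) fine (P [set w | B i w = b i]))%:E.

End Cookie.

From HB Require Import structures.
From mathcomp Require Import all_boot all_order all_algebra.
From mathcomp Require Import all_classical all_reals all_analysis.
From mathcomp Require Import ring lra zify.
Import Order.TTheory GRing.Theory Num.Theory.
Import numFieldNormedType.Exports.
Local Open Scope classical_set_scope.
Local Open Scope ring_scope.

(** The x-th failure occurs at trial U_p(x) + x, so U_p(x) > x(mu + eps) means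
  fewer than x failures among the first ~ x(1 + mu + eps) trials, and
  U_p(x) < x(mu - eps) means at least x failures among the first
  ~ x(1 + mu - eps) trials.  Since the partial sums of p stay within K of
  n pbar, both are deviations of order eps x (1 - pbar) of a sum of
  independent Bernoulli variables below its mean, and a Chernoff bound makes
  each of them cost exp(- c eps^2 x / (1 + mu + eps)).  When eps x is too small
  for this, the claimed bound exceeds 1. *)

Lemma expRN_le_quadratic {R : realType} (l : R) : 0 <= l -> expR (- l) <= 1 - l + l ^+ 2.
Proof.
move=> l0.
have -> : - l = - (l / 2) + - (l / 2) by field.
rewrite expRD expRN -invfM -div1r ler_pdivrMr; last by rewrite mulr_gt0 ?expR_gt0.
set m := (X in X * _).
have hy : 1 + l / 2 <= expR (l / 2) by apply: expR_ge1Dx.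
have hyy : (1 + l / 2) * (1 + l / 2) <= expR (l / 2) * expR (l / 2).
  by apply: ler_pM => //; lra.
have m0 : 0 < m by rewrite /m; nra.
apply: le_trans (ler_wpM2l (ltW m0) hyy); rewrite /m; nra.
Qed.

Definition count_coord {n : nat} (s : bool) (b : {ffun 'I_n -> bool}) : nat :=
  (\sum_i (b i == s))%N.

(* [\prod_i rho i (b i)] is the mass of [b] under the product of the laws
   [rho i] on [bool], so these are Chernoff bounds for [count_coord s]. *)
Section CountLowerTail.
Variables (R : realType) (n : nat) (rho : 'I_n -> bool -> R) (s : bool).
Hypothesis rho_ge0 : forall i v, 0 <= rho i v.
Hypothesis rho_sum : forall i, rho i true + rho i false = 1.

Let rho_le1 i v : rho i v <= 1.
Proof. by have := rho_sum i; have := rho_ge0 i true; have := rho_ge0 i false; case: v; lra. Qed.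

Lemma count_lower_tail_mgf (l a : R) : 0 <= l ->
  \sum_(b | (count_coord s b)%:R <= a) \prod_i rho i (b i) <=
  expR (l * a) * \prod_i (1 - rho i s * (1 - expR (- l))).
Proof.
move=> l0.
apply: (@le_trans _ _ (\sum_(b : {ffun 'I_n -> bool})
    (\prod_i rho i (b i)) * expR (l * (a - (count_coord s b)%:R)))).
  rewrite [leLHS]big_mkcond /=; apply: ler_sum => b _.
  have mass0 : 0 <= \prod_i rho i (b i) by apply: prodr_ge0.
  case: ifP => [le_a|_]; last by rewrite mulr_ge0 ?expR_ge0.
  apply: ler_peMr => //; apply: le_trans (expR_ge1Dx _).
  by rewrite lerDl mulr_ge0 // subr_ge0.
have weightE (b : {ffun 'I_n -> bool}) :
    expR (l * (a - (count_coord s b)%:R)) = expR (l * a) * \prod_i expR (- l * (b i == s)%:R).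
  rewrite -expR_sum -expRD /count_coord natr_sum -mulr_sumr; congr expR; ring.
rewrite [leLHS](eq_bigr (fun b : {ffun 'I_n -> bool} =>
    expR (l * a) * \prod_i (rho i (b i) * expR (- l * (b i == s)%:R)))); last first.
  by move=> b _; rewrite weightE mulrCA -big_split.
rewrite -mulr_sumr ler_wpM2l ?expR_ge0 //.
rewrite -(bigA_distr_bigA (fun i (v : bool) => rho i v * expR (- l * (v == s)%:R))) /=.
apply: ler_prod => i _; rewrite big_bool /=.
have := rho_sum i; have := rho_ge0 i true; have := rho_ge0 i false.
have := expR_gt0 (- l).
by case: s => /=; rewrite ?mulr1 ?mulr0 ?expR0 ?mulr1 => *; apply/andP; split; nra.
Qed.

Lemma count_lower_tail_exp (l a : R) : 0 <= l ->
  \sum_(b | (count_coord s b)%:R <= a) \prod_i rho i (b i) <=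
  expR (l * a - (l - l ^+ 2) * \sum_i rho i s).
Proof.
move=> l0; apply: le_trans (count_lower_tail_mgf _ a l0) _.
set y := 1 - expR (- l).
have y_le1 : y <= 1 by have := expR_gt0 (- l); rewrite /y; lra.
have y_ge0 : 0 <= y by have := expR_le1 (- l); rewrite oppr_le0 l0 /y; lra.
have y_ge : l - l ^+ 2 <= y by have := expRN_le_quadratic l l0; rewrite /y; lra.
apply: (@le_trans _ _ (expR (l * a) * \prod_i expR (- (rho i s * y)))).
  rewrite ler_wpM2l ?expR_ge0 //; apply: ler_prod => i _; apply/andP; split.
    by have := rho_le1 i s; have := rho_ge0 i s; nra.
  by have := expR_ge1Dx (- (rho i s * y)); lra.
rewrite -expR_sum -expRD ler_expR sumrN -mulr_suml.
have : 0 <= \sum_i rho i s by apply: sumr_ge0.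
nra.
Qed.

Lemma count_lower_tail (a D : R) : (0 < n)%N -> 0 <= D -> a + D <= \sum_i rho i s ->
  \sum_(b | (count_coord s b)%:R <= a) \prod_i rho i (b i) <= expR (- (D ^+ 2 / (4 * n%:R))).
Proof.
move=> n0 D0 aD.
have n0' : 0 < (n%:R : R) by rewrite ltr0n.
have sum_le : \sum_i rho i s <= n%:R.
  by rewrite -[n in X in _ <= X]card_ord -sumr_const ler_sum // => i _; apply: rho_le1.
set l := D / (2 * n%:R).
have l0 : 0 <= l by rewrite divr_ge0 // mulr_ge0.
apply: le_trans (count_lower_tail_exp _ a l0) _; rewrite ler_expR.
have sq : - (l * D) + l ^+ 2 * n%:R = - (D ^+ 2 / (4 * n%:R)).
  by rewrite /l; field; rewrite pnatr_eq0 -lt0n.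
have tail : l * a - l * \sum_i rho i s <= - (l * D) by rewrite -mulrBr -mulrN ler_wpM2l //; lra.
have head : l ^+ 2 * \sum_i rho i s <= l ^+ 2 * n%:R by rewrite ler_wpM2l ?sqr_ge0.
lra.
Qed.

End CountLowerTail.

Arguments count_lower_tail {R n rho s} rho_ge0 rho_sum {a D}.

Section Trials.
Variables (R : realType) (d : measure_display) (T : measurableType d).
Variables (P : probability T R) (B : nat -> T -> bool).
Hypothesis B_rvs : bool_rvs B.
Hypothesis B_indep : mutually_independent P B.

Definition trials n w : {ffun 'I_n -> bool} := [ffun i : 'I_n => B i w].

Lemma trials_fiber_measurable n (b : {ffun 'I_n -> bool}) : measurable [set w | trials n w = b].
Proof.
have -> : [set w | trials n w = b] = \bigcap_(i in [set: 'I_n]) [set w | B i w = b i].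
  apply/seteqP; split => w /=; first by move=> <- i _; rewrite ffunE.
  by move=> h; apply/ffunP => i; rewrite ffunE; apply: h.
by apply: fin_bigcap_measurable; [exact: finite_finset | move=> i _; apply: B_rvs].
Qed.

Lemma trials_fiber_prob n (b : {ffun 'I_n -> bool}) :
  P [set w | trials n w = b] = (\prod_(i < n) fine (P [set w | B i w = b i]))%:E.
Proof.
(* [mutually_independent] speaks of patterns on all of [nat]: pad [b]. *)
pose bext k := if insub k is Some i then b i else false.
have bextE (i : 'I_n) : bext i = b i by rewrite /bext valK.
have -> : [set w | trials n w = b] = [set w | forall i, i \in iota 0 n -> B i w = bext i].
  apply/seteqP; split => w /=.
    move=> tb k; rewrite mem_iota add0n /= => kn.
    by rewrite /bext; case: insubP => [j _ <-|]; rewrite ?kn // -tb ffunE.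
  move=> h; apply/ffunP => i; rewrite ffunE -bextE; apply: h.
  by rewrite mem_iota add0n ltn_ord.
have -> : iota 0 n = index_iota 0 n by rewrite /index_iota subn0.
rewrite B_indep ?iota_uniq // big_mkord.
by under eq_bigr do rewrite bextE.
Qed.

Lemma trials_event_bigcup n (Q : pred {ffun 'I_n -> bool}) :
  [set w | Q (trials n w)] = \bigcup_(b in [set` Q]) [set w | trials n w = b].
Proof. by apply/seteqP; split => w /= => [h|[b /= Qb ->]]; first exists (trials n w). Qed.

Lemma trials_event_measurable n (Q : pred {ffun 'I_n -> bool}) :
  measurable [set w | Q (trials n w)].
Proof.
rewrite trials_event_bigcup; apply: fin_bigcup_measurable; first exact: finite_finset.
by move=> b _; apply: trials_fiber_measurable.
Qed.

Lemma trials_event_prob n (Q : pred {ffun 'I_n -> bool}) :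
  P [set w | Q (trials n w)] =
  (\sum_(b | Q b) \prod_(i < n) fine (P [set w | B i w = b i]))%:E.
Proof.
rewrite trials_event_bigcup measure_fin_bigcup.
- rewrite -(bigfs _ (index_enum_uniq _)); last by move=> i _; rewrite mem_index_enum.
  by rewrite -sumEFin; apply: eq_bigr => b _; exact: trials_fiber_prob.
- exact: finite_finset.
- by move=> i j _ _ [w [/= <- <-]].
- by move=> b _; apply: trials_fiber_measurable.
Qed.

End Trials.

Arguments trials {d T} B n w.
Arguments trials_event_measurable {d T B} B_rvs {n} Q.
Arguments trials_event_prob {R d T P B} B_rvs B_indep {n} Q.

Lemma lt_above_mean_divr {R : realType} (X u m eps : R) : 0 < X ->
  (eps < u * X^-1 - m) = (X * (m + eps) < u).
Proof.
move=> X0; have -> : (eps < u * X^-1 - m) = (m + eps < u / X) by apply/idP/idP; lra.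
by rewrite ltr_pdivlMr // mulrC.
Qed.

Lemma lt_below_mean_divr {R : realType} (X u m eps : R) : 0 < X ->
  (eps < - (u * X^-1 - m)) = (u < X * (m - eps)).
Proof.
move=> X0; have -> : (eps < - (u * X^-1 - m)) = (u / X < m - eps) by apply/idP/idP; lra.
by rewrite ltr_pdivrMr // mulrC.
Qed.

Section Failures.
Variables (R : realType) (d : measure_display) (T : measurableType d).
Variable B : nat -> T -> bool.

Lemma nfail0 w : nfail B 0 w = 0%N.
Proof. by rewrite /nfail big_ord0. Qed.

Lemma nfailS k w : nfail B k.+1 w = (nfail B k w + ~~ B k w)%N.
Proof. by rewrite /nfail big_ord_recr. Qed.

Lemma nfail_le k w : (nfail B k w <= k)%N.
Proof. by elim: k => [|k IH]; rewrite ?nfail0 // nfailS; case: (B k w) => /=; lia. Qed.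

Lemma nfail_monotone w k k' : (k <= k')%N -> (nfail B k w <= nfail B k' w)%N.
Proof.
move=> /subnK <-; elim: (k' - k)%N => [|j IH]; first by rewrite add0n.
by rewrite addSn nfailS; lia.
Qed.

Lemma nfail_reaches x w k : (x <= nfail B k w)%N -> exists2 j, (j <= k)%N & nfail B j w = x.
Proof.
elim: k => [|k IH]; first by rewrite nfail0 leqn0 => /eqP ->; exists 0%N; rewrite ?nfail0.
move=> le_x; case: (leqP x (nfail B k w)) => [/IH [j jk <-]|lt_x].
  by exists j => //; lia.
by exists k.+1 => //; move: le_x lt_x; rewrite nfailS; case: (B k w) => /=; lia.
Qed.

Lemma Ucookie_spec x w : (0 < x)%N ->
  (Ucookie (R := R) B x w = +oo%E /\ forall k, (nfail B k w < x)%N) \/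
  exists u : nat, Ucookie (R := R) B x w = (u%:R)%:E /\
    forall k, (nfail B k w < x)%N = (k < u + x)%N.
Proof.
move=> x0; rewrite /Ucookie; case: pselect => [hit|nohit].
- right; case: ex_minnP => m /eqP hm m_min.
  have xm : (x <= m)%N by rewrite -{1}hm nfail_le.
  exists (m - x)%N; split => // k; rewrite subnK //; apply/idP/idP.
  + move=> lt_x; rewrite ltnNge; apply/negP => /(nfail_monotone w); rewrite hm; lia.
  + move=> km; rewrite ltnNge; apply/negP => /nfail_reaches [j jk /eqP /m_min]; lia.
- left; split => // k; rewrite ltnNge; apply/negP => /nfail_reaches [j _ hj].
  by apply: nohit; exists j; apply/eqP.
Qed.

Lemma nfail_count_coord k w : nfail B k w = count_coord false (trials B k w).
Proof. by apply: eq_bigr => i _; rewrite ffunE; case: (B i w). Qed.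

Lemma count_coord_true_nfail k w : (count_coord true (trials B k w) + nfail B k w)%N = k.
Proof.
rewrite nfail_count_coord /count_coord -big_split /=.
rewrite -[k in RHS]card_ord -sum1_card; apply: eq_bigr => i _.
by case: (trials B k w i).
Qed.

Lemma nfail_event_measurable : bool_rvs B ->
  forall k (Q : pred nat), measurable [set w | Q (nfail B k w)].
Proof.
move=> B_rvs k Q.
under eq_set do rewrite nfail_count_coord.
exact: (trials_event_measurable B_rvs (fun b => Q (count_coord false b))).
Qed.

Lemma Ucookie_deviation_event x (m eps : R) : (0 < x)%N -> 0 <= x%:R * (m + eps) ->
  [set w | (`| Ucookie B x w * (x%:R^-1)%:E - m%:E | > eps%:E)%E] =
  [set w | (nfail B (Num.truncn (x%:R * (m + eps)) + x) w < x)%N] `|`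
  \bigcup_(j in [set j : nat | j%:R < x%:R * (m - eps)]) [set w | (x <= nfail B (j + x) w)%N].
Proof.
move=> x0 t0; have X0 : 0 < (x%:R : R) by rewrite ltr0n.
apply/seteqP; split => w /=; case: (Ucookie_spec _ w x0) => [[-> never]|[u [-> before]]].
- by move=> _; left; apply: never.
- rewrite -EFinM -EFinB abse_EFin lte_fin ltr_normr lt_above_mean_divr //.
  rewrite lt_below_mean_divr // => /orP[up|down].
    by left; rewrite /= before ltn_add2r truncn_lt_nat.
  by right; exists u => //=; rewrite leqNgt before ltnn.
- move=> _; rewrite gt0_mulye ?lte_fin ?invr_gt0 // addye //=; exact: ltey.
- rewrite -EFinM -EFinB abse_EFin lte_fin ltr_normr lt_above_mean_divr //.
  rewrite lt_below_mean_divr //.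
  case=> [/= | [j /= down]]; first by rewrite before ltn_add2r truncn_lt_nat // => ->.
  rewrite leqNgt before ltn_add2r -leqNgt -(ler_nat R) => uj.
  by apply/orP; right; apply: le_lt_trans down.
Qed.

End Failures.

Arguments nfail_event_measurable {d T B} B_rvs k Q.
Arguments count_coord_true_nfail {d T} B k w.
Arguments Ucookie_deviation_event {R d T} B {x m eps}.

Section Deviation.
Variables (R : realType) (p : nat -> R) (pbar K : R).
Hypothesis p01 : forall i, 0 <= p i <= 1.
Hypothesis pbar01 : 0 < pbar < 1.
Hypothesis pavg_dev : forall n : nat, (0 < n)%N -> `|pavg p n - pbar| <= K / n%:R.

Let q := 1 - pbar.
Let mu := pbar / q.
Let C := 1 + `|K|.
Let c := q ^+ 2 / (16 * C).
Let rate (x : nat) (eps : R) := c * eps ^+ 2 / (1 + mu + eps) * x%:R.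

Let q_gt0 : 0 < q. Proof. by rewrite /q; case/andP: pbar01; lra. Qed.
Let q_le1 : q <= 1. Proof. by rewrite /q; case/andP: pbar01; lra. Qed.
Let mu_ge0 : 0 <= mu. Proof. by rewrite /mu divr_ge0 ?ltW //; case/andP: pbar01. Qed.
Let mu1_q : (1 + mu) * q = 1. Proof. by rewrite /mu /q; field; exact: lt0r_neq0 q_gt0. Qed.
Let K_le : K <= C - 1. Proof. by rewrite /C; have := ler_norm K; lra. Qed.
Let C_ge1 : 1 <= C. Proof. by rewrite /C; have := normr_ge0 K; lra. Qed.
Let C_gt0 : 0 < C. Proof. exact: lt_le_trans ltr01 C_ge1. Qed.

Lemma deviation_const_gt0 : 0 < c.
Proof. by rewrite /c divr_gt0 ?exprn_gt0 ?mulr_gt0. Qed.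

Lemma sum_p_dev {n : nat} : (0 < n)%N -> n%:R * pbar - K <= \sum_(i < n) p i <= n%:R * pbar + K.
Proof.
move=> n0; have n0' : 0 < (n%:R : R) by rewrite ltr0n.
rewrite -ler_distl.
have -> : \sum_(i < n) p i - n%:R * pbar = n%:R * (pavg p n - pbar).
  by rewrite mulrBr /pavg mulrCA divff ?mulr1 // lt0r_neq0.
by rewrite normrM ger0_norm ?ler0n // mulrC -ler_pdivlMr //; apply: pavg_dev.
Qed.

Let rate_le_inv8 x eps : 0 < eps -> x%:R * eps * q < 2 * C -> rate x eps <= 1 / 8.
Proof.
move=> eps0 small; have M0 : 0 < 1 + mu + eps by have := mu_ge0; lra.
rewrite -(@ler_pM2r _ (16 * C * (1 + mu + eps))); last by rewrite !mulr_gt0.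
have -> : rate x eps * (16 * C * (1 + mu + eps)) = (q * eps) * (x%:R * eps * q).
  by rewrite /rate /c; field; rewrite !gt_eqF.
have qeps0 : 0 <= q * eps by rewrite mulr_ge0 ?ltW.
have qeps : q * eps <= 1 + mu + eps by have := q_le1; have := mu_ge0; nra.
have : (q * eps) * (x%:R * eps * q) <= (q * eps) * (2 * C).
  by apply: ler_wpM2l => //; exact: ltW.
have : (q * eps) * (2 * C) <= (1 + mu + eps) * (2 * C).
  by apply: ler_wpM2r => //; rewrite mulr_ge0 ?ltW.
lra.
Qed.

Variables (d : measure_display) (T : measurableType d).
Variables (P : probability T R) (B : nat -> T -> bool).
Hypotheses (B_rvs : bool_rvs B) (B_indep : mutually_independent P B).
Hypothesis B_law : forall i, P [set w | B i w = true] = (p i)%:E.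

Lemma trial_law i v : fine (P [set w | B i w = v]) = if v then p i else 1 - p i.
Proof.
case: v; first by rewrite B_law.
have -> : [set w | B i w = false] = ~` [set w | B i w = true].
  by apply/seteqP; split => w /=; case: (B i w).
by rewrite probability_setC ?B_law //; apply: B_rvs.
Qed.

Lemma count_coord_le_prob x eps n s (a : R) : (0 < x)%N -> 0 < eps -> (0 < n)%N ->
  n%:R <= x%:R * (1 + mu + eps) ->
  a + x%:R * eps * q / 2 <= \sum_(i < n) fine (P [set w | B i w = s]) ->
  (P [set w | ((count_coord s (trials B n w))%:R <= a)%R] <= (expR (- rate x eps))%:E)%E.
Proof.
move=> x0 eps0 n0 n_le a_le.
have q0 := q_gt0; have C1 := C_ge1; have C0 := C_gt0; have c0 := deviation_const_gt0.
have X0 : 0 < (x%:R : R) by rewrite ltr0n.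
have M0 : 0 < 1 + mu + eps by have := mu_ge0; lra.
rewrite (trials_event_prob B_rvs B_indep (fun b => (count_coord s b)%:R <= a)) lee_fin.
have law_ge0 i v : 0 <= fine (P [set w | B i w = v]).
  by rewrite trial_law; case: v; have := p01 i; lra.
have law_sum i : fine (P [set w | B i w = true]) + fine (P [set w | B i w = false]) = 1.
  by rewrite !trial_law; ring.
have D0 : 0 <= x%:R * eps * q / 2 by rewrite !mulr_ge0 ?ltW.
apply: le_trans (count_lower_tail law_ge0 law_sum n0 D0 a_le) _.
rewrite ler_expR lerN2 ler_pdivlMr; last by rewrite mulr_gt0 ?ltr0n.
have rate0 : 0 <= rate x eps.
  rewrite /rate; apply: mulr_ge0 => //; apply: divr_ge0; last exact: ltW M0.
  exact: mulr_ge0 (ltW c0) (sqr_ge0 _).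
have rateE : rate x eps * (4 * (x%:R * (1 + mu + eps))) = (x%:R * eps * q / 2) ^+ 2 / C.
  by rewrite /rate /c; field; rewrite !gt_eqF.
have : (x%:R * eps * q / 2) ^+ 2 / C <= (x%:R * eps * q / 2) ^+ 2.
  by rewrite ler_pdivrMr // ler_peMr ?sqr_ge0.
have : rate x eps * (4 * n%:R) <= rate x eps * (4 * (x%:R * (1 + mu + eps))).
  by apply: ler_wpM2l => //; lra.
lra.
Qed.

Lemma nfail_lt_prob x eps : (0 < x)%N -> 0 < eps -> 2 * C <= x%:R * eps * q ->
  (P [set w | (nfail B (Num.truncn (x%:R * (mu + eps)) + x) w < x)%N]
    <= (expR (- rate x eps))%:E)%E.
Proof.
move=> x0 eps0 big.
have mu0 := mu_ge0; have q0 := q_gt0; have q1 := q_le1; have K1 := K_le.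
set t := x%:R * (mu + eps); set n := (Num.truncn t + x)%N.
have t0 : 0 <= t by rewrite mulr_ge0 //; lra.
have t_lt : t < (Num.truncn t)%:R + 1 by rewrite natr1 -truncn_le_nat.
have t_ge : (Num.truncn t)%:R <= t by rewrite -truncn_ge_nat.
have nE : (n%:R : R) = (Num.truncn t)%:R + x%:R by rewrite natrD.
have n0 : (0 < n)%N by rewrite addn_gt0 x0 orbT.
apply: (@le_trans _ _ (P [set w | (count_coord false (trials B n w))%:R <= x%:R :> R])).
  apply: le_measure; rewrite ?inE.
  - exact: (nfail_event_measurable B_rvs n (fun k => k < x)%N).
  - exact: (trials_event_measurable B_rvs (fun b => (count_coord false b)%:R <= x%:R :> R)).
  - by move=> w /= lt_x; rewrite -nfail_count_coord ler_nat ltnW.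
apply: count_coord_le_prob => //.
  by rewrite nE (_ : x%:R * (1 + mu + eps) = t + x%:R); [lra | rewrite /t; ring].
under eq_bigr do rewrite trial_law.
rewrite sumrB sumr_const card_ord.
have [_ sum_le] := andP (sum_p_dev n0).
have : (t + x%:R - 1) * q <= n%:R * q by apply: ler_wpM2r; [exact: ltW | lra].
have -> : (t + x%:R - 1) * q = x%:R * ((1 + mu) * q) + x%:R * eps * q - q by rewrite /t; ring.
have -> : (n%:R : R) * q = n%:R - n%:R * pbar by rewrite /q; ring.
rewrite mu1_q mulr1 -[1 *+ n]/(n%:R); lra.
Qed.

Lemma nfail_ge_trunc_prob x eps : (0 < x)%N -> 0 < eps -> 2 * C <= x%:R * eps * q ->
  0 <= mu - eps ->
  (P [set w | (x <= nfail B (Num.truncn (x%:R * (mu - eps)) + x) w)%N]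
    <= (expR (- rate x eps))%:E)%E.
Proof.
move=> x0 eps0 big dev0.
have q0 := q_gt0; have K1 := K_le.
set t := x%:R * (mu - eps); set n := (Num.truncn t + x)%N.
have t0 : 0 <= t by rewrite mulr_ge0.
have t_ge : (Num.truncn t)%:R <= t by rewrite -truncn_ge_nat.
have nE : (n%:R : R) = (Num.truncn t)%:R + x%:R by rewrite natrD.
have n0 : (0 < n)%N by rewrite addn_gt0 x0 orbT.
apply: (@le_trans _ _ (P [set w | (count_coord true (trials B n w))%:R <= n%:R - x%:R :> R])).
  apply: le_measure; rewrite ?inE.
  - exact: (nfail_event_measurable B_rvs n (fun k => x <= k)%N).
  - exact: (trials_event_measurable B_rvs
      (fun b => (count_coord true b)%:R <= n%:R - x%:R :> R)).
  - move=> w /= le_x; rewrite lerBrDr -natrD ler_nat.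
    by have := count_coord_true_nfail B n w; lia.
apply: count_coord_le_prob => //.
  have : 0 <= x%:R * eps by rewrite mulr_ge0 // ltW.
  rewrite nE (_ : x%:R * (1 + mu + eps) = t + x%:R + 2 * (x%:R * eps)); first lra.
  by rewrite /t; ring.
under eq_bigr do rewrite trial_law.
have [sum_ge _] := andP (sum_p_dev n0).
have : n%:R * q <= (t + x%:R) * q by apply: ler_wpM2r; [exact: ltW | lra].
have -> : (t + x%:R) * q = x%:R * ((1 + mu) * q) - x%:R * eps * q by rewrite /t; ring.
have -> : (n%:R : R) * q = n%:R - n%:R * pbar by rewrite /q; ring.
rewrite mu1_q mulr1; lra.
Qed.

Lemma nfail_ge_prob x eps : (0 < x)%N -> 0 < eps -> 2 * C <= x%:R * eps * q ->
  (P (\bigcup_(j in [set j : nat | (j%:R < x%:R * (mu - eps))%R])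
        [set w | (x <= nfail B (j + x) w)%N]) <= (expR (- rate x eps))%:E)%E.
Proof.
move=> x0 eps0 big.
have [dev0|dev_lt0] := lerP 0 (mu - eps).
  apply: le_trans (nfail_ge_trunc_prob x eps x0 eps0 big dev0).
  apply: le_measure; rewrite ?inE.
  - by apply: bigcup_measurable => j _; exact: nfail_event_measurable.
  - exact: nfail_event_measurable.
  move=> w [j /= j_lt le_x]; apply: (leq_trans le_x); apply: nfail_monotone.
  by rewrite leq_add2r truncn_ge_nat; [exact: ltW | rewrite mulr_ge0].
rewrite (_ : \bigcup_(j in _) _ = set0) ?measure0 ?lee_fin ?expR_ge0 //.
apply/seteqP; split => // w [j /= j_lt _].
have : x%:R * (mu - eps) < 0 by rewrite pmulr_rlt0 ?ltr0n.
by have : (0 : R) <= j%:R by []; lra.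
Qed.

Lemma deviation_prob x eps : (0 < x)%N -> 0 < eps ->
  (P [set w | (`| Ucookie B x w * (x%:R^-1)%:E - mu%:E | > eps%:E)%E]
    <= (2 * expR (- rate x eps))%:E)%E.
Proof.
move=> x0 eps0.
have t0 : 0 <= x%:R * (mu + eps) by rewrite mulr_ge0 //; have := mu_ge0; lra.
rewrite (Ucookie_deviation_event B x0 t0).
have up_meas :=
  nfail_event_measurable B_rvs (Num.truncn (x%:R * (mu + eps)) + x) (fun k => k < x)%N.
have down_meas : measurable (\bigcup_(j in [set j : nat | j%:R < x%:R * (mu - eps)])
    [set w | (x <= nfail B (j + x) w)%N]).
  by apply: bigcup_measurable => j _; exact: nfail_event_measurable.
have [small|big] := ltP (x%:R * eps * q) (2 * C).
  apply: le_trans (probability_le1 _ (measurableU _ _ up_meas down_meas)) _.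
  have := rate_le_inv8 x eps eps0 small; have := expR_ge1Dx (- rate x eps).
  by rewrite lee_fin; lra.
apply: le_trans (measureU2 P up_meas down_meas) _.
apply: le_trans (leeD (nfail_lt_prob x eps x0 eps0 big) (nfail_ge_prob x eps x0 eps0 big)) _.
by rewrite -EFinD lee_fin; lra.
Qed.

End Deviation.

Arguments deviation_const_gt0 {R pbar K}.
Arguments deviation_prob {R p pbar K} p01 pbar01 pavg_dev {d T P B} B_rvs B_indep B_law {x eps}.

Theorem proposition2p1 (R : realType) (p : nat -> R) (pbar K : R) :
  (forall i, 0 <= p i <= 1) ->
  pavg p @ \oo --> pbar ->
  0 < pbar < 1 ->
  (forall n : nat, (0 < n)%N -> `|pavg p n - pbar| <= K / n%:R) ->
  let mu := pbar / (1 - pbar) in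
  exists c : R, 0 < c /\
    forall (d : measure_display) (T : measurableType d)
           (P : probability T R) (B : nat -> T -> bool),
      bool_rvs B ->
      mutually_independent P B ->
      (forall i, P [set w | B i w = true] = (p i)%:E) ->
      forall (x : nat) (eps : R), (0 < x)%N -> 0 < eps ->
        (P [set w | (`| Ucookie B x w * (x%:R^-1)%:E - mu%:E | > eps%:E)%E]
        <= (2 * expR (- (c * eps ^+ 2 / (1 + mu + eps)) * x%:R))%:E)%E.
Proof.
(* Convergence of [pavg p] is implied by the rate hypothesis. *)
move=> p01 _ pbar01 pavg_dev mu.
exists ((1 - pbar) ^+ 2 / (16 * (1 + `|K|))); split; first exact: deviation_const_gt0 pbar01.
move=> d T P B B_rvs B_indep B_law x eps x0 eps0; rewrite mulNr.
exact: (deviation_prob p01 pbar01 pavg_dev B_rvs B_indep B_law x0 eps0).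
Qed.
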